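(* Let $(M,d)$ be a compact metric space, $\varphi:M\to M$ continuous, and $\{G_n\}\subset B(M)$ such that there exists $\{G^{(k)}\}\subset B(M)$ with $\lim_{k\to\infty}\limsup_{n\to\infty}n^{-1}\|G_n-S_nG^{(k)}\|_\infty=0$. Then $\lim_{k\to\infty}\limsup_{n\to\infty}n^{-1}\|G_n-k^{-1}S_nG_k\|_\infty=0$.
   Context: $B(M)$: bounded Borel real functions, $\|f\|_\infty=\sup|f|$; $S_nG=\sum_{k=0}^{n-1}G\circ\varphi^k$. *)

From HB Require Import structures.
From mathcomp Require Import all_boot all_order all_algebra.
From mathcomp Require Import all_classical all_reals all_analysis.
Set Implicit Arguments. Unset Strict Implicit. Unset Printing Implicit Defensive.
Import Order.TTheory GRing.Theory Num.Theory.
Import numFieldNormedType.Exports.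
Local Open Scope classical_set_scope.
Local Open Scope ring_scope.

Definition borel_set (T : topologicalType) (A : set T) : Prop :=
  <<s [set U : set T | open U] >> A.

Definition borel_fun (T : topologicalType) (R : realType) (f : T -> R) : Prop :=
  forall B : set R, measurable B -> borel_set (f @^-1` B).

Definition bounded_fun (T : Type) (R : realType) (f : T -> R) : Prop :=
  exists C : R, forall x, `|f x| <= C.

Definition BM (T : topologicalType) (R : realType) (f : T -> R) : Prop :=
  borel_fun f /\ bounded_fun f.

(* sup norm ||f||_oo = sup_x |f x| (meaningful for bounded f) *)
Definition supnorm (T : Type) (R : realType) (f : T -> R) : R :=
  sup [set `|f x| | x in [set: T]].

Definition birkhoff (T : Type) (R : realType) (phi : T -> T) (n : nat)
  (G : T -> R) : T -> R :=
  fun x => \sum_(0 <= k < n) G (iter k phi x).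

From Pilot Require Import Defs.
From HB Require Import structures.
From mathcomp Require Import all_boot all_order all_algebra.
From mathcomp Require Import all_classical all_reals all_analysis.
From mathcomp Require Import ring lra.
(* MathComp-Analysis also defines [bounded_fun]; Defs' one must take precedence. *)
Import Defs.
Import Order.TTheory GRing.Theory Num.Theory.
Import numFieldNormedType.Exports.
Local Open Scope classical_set_scope.
Local Open Scope ring_scope.

(* Fix an approximant H = G^(j) with |H| <= C. Writing
     G_n - k^-1 S_n G_k
       = (G_n - S_n H) + k^-1 (k S_n H - S_n S_k H) - k^-1 S_n (G_k - S_k H),
   and noting that S_n S_k H = sum_{l<k} S_n H o phi^l differs from k S_n H by
   at most 2Ck^2 (each shift only changes the two ends of a Birkhoff sum), one
   gets
     n^-1 |G_n - k^-1 S_n G_k| <= n^-1 |G_n - S_n H| + 2Ck/n + k^-1 |G_k - S_k H|.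
   Letting n, then k, go to infinity bounds the iterated limsup by twice the one
   of the approximation by H, which is arbitrarily small. Neither compactness,
   continuity of phi nor measurability plays a role. *)

Section supnorm.
Context {T : Type} {R : realType}.
Implicit Types f g : T -> R.

Lemma bounded_funB {f g} : bounded_fun f -> bounded_fun g -> bounded_fun (f \- g).
Proof.
move=> [C hC] [D hD]; exists (C + D) => x /=.
by rewrite (le_trans (ler_normB _ _))// lerD.
Qed.

Lemma bounded_funZ c {f} : bounded_fun f -> bounded_fun (c \*: f).
Proof. by move=> [C hC]; exists (`|c| * C) => x /=; rewrite normrM ler_wpM2l. Qed.

Lemma ler_supnorm f x : bounded_fun f -> `|f x| <= supnorm f.
Proof.
move=> [C hC]; apply: ub_le_sup; last by exists x.
by exists C => _ [y _ <-].
Qed.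

Lemma supnorm_le f C : 0 <= C -> (forall x, `|f x| <= C) -> supnorm f <= C.
Proof.
move=> C0 hC; rewrite /supnorm.
have [->|ne] := eqVneq [set `|f x| | x in [set: T]] set0; first by rewrite sup0.
by apply: ge_sup; [exact/set0P | move=> _ [y _ <-]].
Qed.

Lemma supnorm_ge0 f : bounded_fun f -> 0 <= supnorm f.
Proof.
move=> bf; rewrite /supnorm.
have [->|/set0P [_ [y _ _]]] := eqVneq [set `|f x| | x in [set: T]] set0.
  by rewrite sup0.
exact: le_trans (normr_ge0 _) (ler_supnorm f y bf).
Qed.

End supnorm.

Lemma ler_norm_sum_shift (R : numDomainType) (u : nat -> R) C n l :
  (forall m, `|u m| <= C) ->
  `|\sum_(0 <= i < n) u (i + l)%N - \sum_(0 <= i < n) u i| <= l%:R * (2 * C).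
Proof.
move=> uC.
have sum_le m : `|\sum_(m <= i < m + l) u i| <= l%:R * C.
  rewrite (le_trans (ler_norm_sum _ _ _))// (le_trans (ler_sum _ (fun i _ => uC i)))//.
  by rewrite sumr_const_nat addnC addnK mulr_natl.
have -> : \sum_(0 <= i < n) u (i + l)%N - \sum_(0 <= i < n) u i =
          \sum_(n <= i < n + l) u i - \sum_(0 <= i < 0 + l) u i.
  have split_at m : (m <= n + l)%N ->
      \sum_(0 <= i < n + l) u i = \sum_(0 <= i < m) u i + \sum_(m <= i < n + l) u i.
    by move=> mnl; rewrite -big_cat_nat.
  have shifted : \sum_(0 <= i < n) u (i + l)%N = \sum_(l <= i < n + l) u i.
    by rewrite -[l in RHS]add0n big_addn addnK.
  have := split_at n (leq_addr _ _); rewrite (split_at l (leq_addl _ _)) -shifted.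
  by rewrite add0n => /(canRL (addKr _)) ->; ring.
have -> : l%:R * (2 * C) = l%:R * C + l%:R * C by ring.
by rewrite (le_trans (ler_normB _ _))// lerD.
Qed.

Section birkhoff.
Context {T : Type} {R : realType} (phi : T -> T).
Implicit Types f g : T -> R.

Lemma birkhoffB n f g x :
  birkhoff phi n (f \- g) x = birkhoff phi n f x - birkhoff phi n g x.
Proof. by rewrite /birkhoff -sumrB. Qed.

Lemma ler_norm_birkhoff n f C x :
  (forall y, `|f y| <= C) -> `|birkhoff phi n f x| <= n%:R * C.
Proof.
move=> fC; rewrite /birkhoff (le_trans (ler_norm_sum _ _ _))//.
apply: le_trans (ler_sum _ (fun i _ => fC _)) _.
by rewrite sumr_const_nat subn0 mulr_natl.
Qed.

Lemma bounded_fun_birkhoff n {f} : bounded_fun f -> bounded_fun (birkhoff phi n f).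
Proof. by move=> [C fC]; exists (n%:R * C) => x; exact: ler_norm_birkhoff. Qed.

Lemma ler_norm_birkhoff_birkhoff n k f C x : (forall y, `|f y| <= C) ->
  `|birkhoff phi n (birkhoff phi k f) x - k%:R * birkhoff phi n f x|
    <= k%:R * (k%:R * (2 * C)).
Proof.
move=> fC; have C0 := le_trans (normr_ge0 _) (fC x).
pose u m := f (iter m phi x).
have -> : birkhoff phi n (birkhoff phi k f) x =
    \sum_(0 <= l < k) \sum_(0 <= i < n) u (i + l)%N.
  rewrite /birkhoff exchange_big_nat /=; apply: eq_bigr => l _.
  by apply: eq_bigr => i _; rewrite /u addnC iterD.
have -> : k%:R * birkhoff phi n f x = \sum_(0 <= l < k) \sum_(0 <= i < n) u i.
  by rewrite sumr_const_nat subn0 mulr_natl /birkhoff.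
rewrite -sumrB (le_trans (ler_norm_sum _ _ _))//.
apply: (@le_trans _ _ (\sum_(0 <= l < k) k%:R * (2 * C))); last first.
  by rewrite sumr_const_nat subn0 [X in _ <= X]mulr_natl.
apply: ler_sum_nat => l /andP[_ lk].
rewrite (le_trans (@ler_norm_sum_shift _ u C n l (fun m => fC _)))//.
by rewrite ler_wpM2r ?mulr_ge0// ler_nat ltnW.
Qed.

Lemma supnorm_sub_birkhoff_average_le {F K H : T -> R} {C : R} {n k : nat} :
  (0 < k)%N -> 0 <= C -> (forall y, `|H y| <= C) ->
  bounded_fun F -> bounded_fun K ->
  supnorm (F \- k%:R^-1 \*: birkhoff phi n K) <=
  supnorm (F \- birkhoff phi n H) + k%:R * (2 * C)
  + k%:R^-1 * (n%:R * supnorm (K \- birkhoff phi k H)).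
Proof.
move=> k0 C0 HC bF bK.
have bH : bounded_fun H by exists C.
have bFH := bounded_funB bF (bounded_fun_birkhoff n bH).
have bKH := bounded_funB bK (bounded_fun_birkhoff k bH).
have ki0 : 0 < k%:R^-1 :> R by rewrite invr_gt0 ltr0n.
have knz : k%:R != 0 :> R by rewrite pnatr_eq0 -lt0n.
apply: supnorm_le => [|x /=].
  by rewrite !addr_ge0 ?mulr_ge0 ?supnorm_ge0 ?invr_ge0 ?ler0n.
set SnH := birkhoff phi n H x; set SnSkH := birkhoff phi n (birkhoff phi k H) x.
set SnK := birkhoff phi n K x.
have -> : F x - k%:R^-1 *: SnK =
    (F x - SnH) + k%:R^-1 * (k%:R * SnH - SnSkH) - k%:R^-1 * (SnK - SnSkH).
  rewrite !mulrBr mulKf // /GRing.scale /=; lra.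
have shift_err : `|k%:R * SnH - SnSkH| <= k%:R * (k%:R * (2 * C)).
  by rewrite distrC; exact: ler_norm_birkhoff_birkhoff.
have approx_err : `|SnK - SnSkH| <= n%:R * supnorm (K \- birkhoff phi k H).
  by rewrite -birkhoffB; apply: ler_norm_birkhoff => y; exact: ler_supnorm.
rewrite (le_trans (ler_normB _ _))// (le_trans (lerD (ler_normD _ _) (lexx _)))//.
rewrite !normrM gtr0_norm // -!addrA lerD //; first exact: (ler_supnorm _ x bFH).
rewrite lerD //; last by rewrite ler_pM2l.
by rewrite (le_trans (ler_wpM2l (ltW ki0) shift_err))// mulKf.
Qed.

End birkhoff.

Section limn_esup.
Context {R : realType}.
Implicit Types u : nat -> \bar R.
Local Open Scope ereal_scope.

Lemma limn_esup_le_eventually u x N :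
  (forall n, (N <= n)%N -> u n <= x) -> limn_esup u <= x.
Proof.
move=> ux; apply: (@le_trans _ _ (ereal_sup (u @` [set n | (N <= n)%N]))).
  by apply: ereal_inf_lbound; exists [set n | (N <= n)%N] => //; exists N.
by apply: ge_ereal_sup => _ [n Nn <-]; exact: ux.
Qed.

Lemma limn_esup_lt_eventually u x :
  limn_esup u < x -> exists N, forall n, (N <= n)%N -> u n < x.
Proof.
move=> /ereal_inf_lt [_ [V [N _ NV] <-] supx].
exists N => n Nn; apply: le_lt_trans supx.
by apply: ereal_sup_ubound; exists n => //; exact: NV.
Qed.

Lemma limn_esup_ge0 u : (forall n, 0 <= u n) -> 0 <= limn_esup u.
Proof. by apply: limf_esup_ge0; exact: filter_not_empty. Qed.

End limn_esup.

Lemma limn_esup_birkhoff_average_le {R : realType} {T : Type} {phi : T -> T}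
    {G : nat -> T -> R} {H : T -> R} {C e : R} {N k : nat} :
  0 < e -> 0 <= C -> (forall y, `|H y| <= C) -> (forall n, bounded_fun (G n)) ->
  (forall n, (N <= n)%N -> n%:R^-1 * supnorm (G n \- birkhoff phi n H) < e) ->
  (0 < k)%N -> (N <= k)%N ->
  (limn_esup (fun n =>
     (n%:R^-1 * supnorm (G n \- k%:R^-1 \*: birkhoff phi n (G k)))%:E)
   <= (e + e + e)%:E)%E.
Proof.
move=> e0 C0 HC bG approx k0 Nk; set D := k%:R * (2 * C).
apply: (@limn_esup_le_eventually _ _ _ (maxn (maxn N 1) (Num.truncn (D / e)).+1)).
move=> n; rewrite !geq_max => /andP[/andP[Nn n0] Dn].
have nR0 : 0 < n%:R :> R by rewrite ltr0n.
have D_small : n%:R^-1 * D < e.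
  rewrite ltr_pdivrMl // -ltr_pdivrMr //.
  by rewrite (lt_le_trans (truncnS_gt _)) // ler_nat.
rewrite lee_fin; apply: le_trans.
  apply: (ler_wpM2l _ (supnorm_sub_birkhoff_average_le phi k0 C0 HC (bG n) (bG k))).
  by rewrite invr_ge0 ltW.
rewrite !mulrDr [n%:R^-1 * (k%:R^-1 * _)]mulrCA mulKf ?gt_eqF //.
by apply/ltW/ltrD; [apply: ltrD; [exact: approx|exact: D_small]|exact: approx].
Qed.

Theorem lemma6p3 (R : realType) (M : metricType R) (phi : M -> M)
  (G : nat -> M -> R) :
  compact [set: M] ->
  continuous phi ->
  (forall n, BM (G n)) ->
  (exists Gk : nat -> M -> R, (forall k, BM (Gk k)) /\
     (fun k => limn_esup (fun n =>
        ((n%:R)^-1 * supnorm (G n \- birkhoff phi n (Gk k)))%:E)) @ \oo --> 0%E) ->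
  (fun k => limn_esup (fun n =>
     ((n%:R)^-1 * supnorm (G n \- (k%:R)^-1 \*: birkhoff phi n (G k)))%:E))
     @ \oo --> 0%E.
Proof.
move=> _ _ BG [Gk [BGk approx]].
have bG n : bounded_fun (G n) by case: (BG n).
apply: limn_esup_le_cvg => [|k]; last first.
  apply: limn_esup_ge0 => n; rewrite lee_fin mulr_ge0 ?invr_ge0 ?supnorm_ge0 //.
  exact/bounded_funB/bounded_funZ/bounded_fun_birkhoff.
apply/lee_addgt0Pr => eps eps0; rewrite add0e.
have e0 : 0 < eps / 3%:R :> R by rewrite divr_gt0.
have -> : eps = eps / 3%:R + eps / 3%:R + eps / 3%:R by lra.
move/fine_cvgP: approx => [[N0 _ finN0] /cvgr_lt /(_ _ e0) [N1 _ ltN1]].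
pose j := maxn N0 N1.
have [_ [C HC]] := BGk j.
have /limn_esup_lt_eventually [N approxN] : (limn_esup (fun n =>
    (n%:R^-1 * supnorm (G n \- birkhoff phi n (Gk j)))%:E) < (eps / 3%:R)%:E)%E.
  by rewrite -(fineK (finN0 j (leq_maxl _ _))) lte_fin; apply: ltN1; exact: leq_maxr.
apply: (@limn_esup_le_eventually _ _ _ (maxn N 1)) => k.
rewrite geq_max => /andP[Nk k0].
have HC' y : `|Gk j y| <= `|C| by rewrite (le_trans (HC y)) ?ler_norm.
apply: (limn_esup_birkhoff_average_le e0 (normr_ge0 C) HC' bG) k0 Nk => n Nn.
by rewrite -lte_fin approxN.
Qed.
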